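(* Let $p$ be an odd prime and $X,Y\in\mathcal{X}_p$. Then $X\subseteq Y$ if and only if $i(Y)$ divides $i(X)$.
   Context: $\mathbb{N}=\{1,2,\dots\}$, $\mathbb{N}_0=\{0\}\cup\mathbb{N}$, $x^{\mathbb{N}}=\{x^k:k\in\mathbb{N}\}$. $\mathbb{Z}_{p^n}=\mathbb{Z}/p^n\mathbb{Z}$ with unit group $\mathbb{Z}_{p^n}^\times$, and $\pi_n:\mathbb{N}\to\mathbb{Z}_{p^n}$, $x\mapsto x+p^n\mathbb{Z}$. The $p$-adic topology on $\mathbb{N}\setminus p\mathbb{N}$ is generated by the sets $x+p^m\mathbb{N}_0$. $\mathcal{X}_p=\{\overline{a^{\mathbb{N}}}:a\in\mathbb{N}\setminus p\mathbb{N},\ a\ne1\}$, closures in the $p$-adic topology on $\mathbb{N}\setminus p\mathbb{N}$. For $X\in\mathcal{X}_p$, $n(X)=\min\{n\in\mathbb{N}: X=\pi_n^{-1}(\pi_n(X)),\ |\pi_n(X)|\ge\max\{p,3\}\}$ (this is well defined, and $\pi_{n(X)}(X)$ is a cyclic subgroup of $\mathbb{Z}_{p^{n(X)}}^\times$), and $i(X)$ is the index of the subgroup $\pi_{n(X)}(X)$ in $\mathbb{Z}_{p^{n(X)}}^\times$. *)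

From HB Require Import structures.
From mathcomp Require Import all_boot all_order all_algebra all_fingroup.
From mathcomp Require Import boolp classical_sets.

Set Implicit Arguments.
Unset Strict Implicit.
Unset Printing Implicit Defensive.

(* The closure of a^N = {a^k : k >= 1} in N \ pN for the p-adic topology,
   whose basic open sets are x + p^m N_0:  x lies in the closure iff
   x is in N \ pN and every basic neighbourhood x + p^m N_0 of x meets a^N. *)
Definition adic_closure_pow (p a : nat) : set nat :=
  fun x => [/\ 0 < x, ~~ (p %| x) &
     forall m : nat, exists k : nat,
       [/\ 0 < k, x <= a ^ k & a ^ k = x %[mod p ^ m]]].

Definition in_calX (p : nat) (X : set nat) : Prop :=
  exists a : nat, [/\ 0 < a, ~~ (p %| a), a != 1 & X = adic_closure_pow p a].

(* pi_n(X) as a subset of Z_{p^n}  (n >= 1 and p >= 2 so that p^n >= 2) *)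
Definition piX (p n : nat) (X : set nat) : {set 'Z_(p ^ n)} :=
  [set r : 'Z_(p ^ n) | `[< exists x : nat, X x /\ ((x%:R)%R : 'Z_(p ^ n)) = r >]].

Definition piX_units (p n : nat) (X : set nat) : {set {unit 'Z_(p ^ n)}} :=
  [set u : {unit 'Z_(p ^ n)} |
     `[< exists x : nat, X x /\ ((x%:R)%R : 'Z_(p ^ n)) = val u >]].

Definition n_admissible (p : nat) (X : set nat) (n : nat) : Prop :=
  [/\ 0 < n,
      (forall x : nat, 0 < x -> (X x <-> ((x%:R)%R : 'Z_(p ^ n)) \in piX p n X))
    & maxn p 3 <= #|piX p n X| ].

(* n(X): the least admissible n (well defined by the paper; 0 otherwise) *)
Definition nX (p : nat) (X : set nat) : nat :=
  xget 0%N (fun n => n_admissible p X n /\ forall m, n_admissible p X m -> n <= m).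

Definition iX (p : nat) (X : set nat) : nat :=
  (#| [set: {unit 'Z_(p ^ nX p X)}] : piX_units p (nX p X) X |)%g.

From HB Require Import structures.
From mathcomp Require Import all_boot all_order all_algebra all_fingroup.
From mathcomp Require Import boolp classical_sets.
From mathcomp Require Import all_solvable ring.

Set Implicit Arguments.
Unset Strict Implicit.
Unset Printing Implicit Defensive.

Import Order.TTheory GRing.Theory FinRing.Theory.

(* For odd p the unit group of Z/p^n is cyclic, so inside it <u> is contained
   in <w> iff the index of <w> divides the index of <u>.  Let X be the closure
   of a^N and write a^(p-1) = 1 + t p^v with p not dividing t.  Lifting the
   exponent gives a^((p-1) p^(n-v)) = 1 + t' p^n with p not dividing t', and
   the powers of this element run through all lifts modulo p^(n+1) of a
   residue modulo p^n.  Hence, for n >= v, X is the full preimage of its image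
   modulo p^n, and that image is the group generated by a mod p^n.  From then
   on the order of a mod p^(n+1) is p times its order mod p^n, so the index of
   pi_n(X) no longer depends on n.  Comparing X and Y at a common level n,
   X is contained in Y iff <a mod p^n> is contained in <b mod p^n>, iff
   i(Y) divides i(X). *)

Lemma pexp_gt1 p n : 1 < p -> 0 < n -> 1 < p ^ n.
Proof. by move=> p_gt1 n_gt0; rewrite -(expn0 p) ltn_exp2l. Qed.

Lemma eqn_mod_pexp p m n x y : m <= n -> x = y %[mod p ^ n] -> x = y %[mod p ^ m].
Proof.
by move=> /(dvdn_exp2l p) dvd_mn Exy; rewrite -(modn_dvdm x dvd_mn) Exy modn_dvdm.
Qed.

Lemma eqn_mod_add x y d : y <= x -> x = y %[mod d] -> exists c, x = y + c * d.
Proof.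
move=> le_yx /eqP; rewrite eqn_mod_dvd // => /dvdnP[c Ec].
by exists c; rewrite -Ec subnKC.
Qed.

Lemma eqn_mod_int x y d :
  x = y %[mod d] <-> exists z : int, (x%:Z = y%:Z + z * d%:Z)%R.
Proof.
have -> : (x = y %[mod d]) <-> (x%:Z == y%:Z %[mod d%:Z])%Z.
  by rewrite !modz_nat; split => [-> // | /eqP[]].
rewrite eqz_mod_dvd; split => [/dvdzP[z Ez] | [z ->]].
  by exists z; rewrite -Ez; ring.
by apply/dvdzP; exists z; ring.
Qed.

Lemma expn_mod_totient q a k j :
  coprime a q -> a ^ (k + totient q * j) = a ^ k %[mod q].
Proof.
move=> co_aq; rewrite expnD expnM -modnMmr -modnXm Euler_exp_totient //.
by rewrite modnXm exp1n modnMmr muln1.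
Qed.

Lemma expn1D_expansion y n :
  exists r, (1 + y) ^ n = 1 + n * y + 'C(n, 2) * y ^ 2 + r * y ^ 3.
Proof.
elim: n => [|n [r IH]]; first by exists 0; rewrite bin_small // expn0 !mul0n.
exists (r + r * y + 'C(n, 2)); rewrite expnS IH binS bin1; ring.
Qed.

Lemma lift_exponent_step p m t : prime p -> odd p -> 0 < m ->
  exists s, (1 + t * p ^ m) ^ p = 1 + (t + s * p) * p ^ m.+1.
Proof.
move=> p_pr p_odd; case: m => // m _.
have [r ->] := expn1D_expansion (t * p ^ m.+1) p.
have /dvdnP[e ->] : p %| 'C(p, 2).
  by rewrite prime_dvd_bin // odd_prime_gt2.
exists (e * t ^ 2 * p ^ m + r * t ^ 3 * p ^ m * p ^ m).
rewrite !expnS; ring.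
Qed.

Lemma lift_exponent p v t j : prime p -> odd p -> 0 < v -> ~~ (p %| t) ->
  exists2 t', ~~ (p %| t') & (1 + t * p ^ v) ^ (p ^ j) = 1 + t' * p ^ (v + j).
Proof.
move=> p_pr p_odd v_gt0 t_ndvd; elim: j => [|j [t' t'_ndvd IH]].
  by exists t; rewrite ?expn0 ?expn1 ?addn0.
have [s Es] := lift_exponent_step t' p_pr p_odd (ltn_addr j v_gt0).
exists (t' + s * p); first by rewrite dvdn_addl ?dvdn_mull.
by rewrite expnSr expnM IH Es addnS.
Qed.

Lemma fermat_pfactor_decomp p a : prime p -> 1 < a -> ~~ (p %| a) ->
  exists v t, [/\ 0 < v, ~~ (p %| t) & a ^ p.-1 = 1 + t * p ^ v].
Proof.
move=> p_pr a_gt1 a_ndvd.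
have a_fermat : a ^ p.-1 = 1 %[mod p].
  by rewrite -(totient_prime p_pr) Euler_exp_totient // coprime_sym prime_coprime.
have b_gt1 : 1 < a ^ p.-1.
  by rewrite -(exp1n p.-1) ltn_exp2r // -ltnS prednK ?prime_gt0 ?prime_gt1.
have [c Ec] := eqn_mod_add (ltnW b_gt1) a_fermat.
have c_gt0 : 0 < c by move: b_gt1; rewrite Ec; case: c {Ec}.
have [t co_pt Et] := pfactor_coprime p_pr c_gt0.
exists (logn p c).+1, t; split => //; first by rewrite -prime_coprime.
by rewrite Ec {1}Et expnSr mulnA.
Qed.

(* Modulo p^(m+1), (1 + t p^m)^s = 1 + s t p^m, so it suffices to solve
   s A t = (x - A) / p^m modulo p, inverting A t by Bezout. *)
Lemma lift_residue_pow p m t A x : prime p -> 0 < m -> ~~ (p %| t) -> ~~ (p %| A) ->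
  x = A %[mod p ^ m] -> exists s, x = A * (1 + t * p ^ m) ^ s %[mod p ^ m.+1].
Proof.
move=> p_pr; case: m => // m _ t_ndvd A_ndvd /eqn_mod_int[c Ec].
have [u [w Euw]] : exists u w : int, (u * p%:Z + w * (A * t)%:Z = 1)%R.
  have co_pAt : coprime p (A * t).
    by rewrite prime_coprime // Euclid_dvdM // negb_or A_ndvd.
  have [u [w Euw]] := Bezoutz p (A * t).
  by exists u, w; rewrite Euw /gcdz /= (eqP co_pAt).
have p_gt0 : (0 < p%:Z)%R by rewrite ltz_nat prime_gt0.
pose s := `|((c * w) %% p%:Z)%Z|%N.
pose Q := ((c * w) %/ p%:Z)%Z.
have Es : (s%:Z = c * w - Q * p%:Z)%R.
  rewrite gez0_abs; last by rewrite modz_ge0 // gt_eqF.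
  by rewrite [in RHS](divz_eq (c * w) p%:Z) addrAC subrr add0r.
exists s; apply/eqn_mod_int.
have [r Er] := expn1D_expansion (t * p ^ m.+1) s.
exists (c * u + A%:Z * t%:Z * Q
        - A%:Z * t%:Z ^+ 2 * ('C(s, 2) + r * t * p ^ m.+1)%:Z * (p ^ m)%:Z)%R.
rewrite Ec Er !expnS expn0 !(PoszD, PoszM) Es -{1}(mulr1 c) -{1}Euw; ring.
Qed.

Definition power_residue (q a x : nat) : Prop := exists k, x = a ^ k %[mod q].

Lemma power_residue_pexpS p a v t n x : prime p -> odd p -> ~~ (p %| a) ->
    0 < v -> ~~ (p %| t) -> a ^ p.-1 = 1 + t * p ^ v -> v <= n ->
  power_residue (p ^ n) a x -> power_residue (p ^ n.+1) a x.
Proof.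
move=> p_pr p_odd a_ndvd v_gt0 t_ndvd Ea /subnKC <- [k Ek].
have [t' t'_ndvd Et'] := lift_exponent (n - v) p_pr p_odd v_gt0 t_ndvd.
have ak_ndvd : ~~ (p %| a ^ k) by rewrite Euclid_dvdX // negb_and a_ndvd.
have [s Es] := lift_residue_pow p_pr (ltn_addr _ v_gt0) t'_ndvd ak_ndvd Ek.
by exists (k + p.-1 * p ^ (n - v) * s); rewrite !expnD !expnM Ea Et'.
Qed.

(* The level N is the p-adic valuation of a^(p-1) - 1. *)
Lemma power_residue_stable p a : prime p -> odd p -> 1 < a -> ~~ (p %| a) ->
  exists2 N, 0 < N &
    forall x, power_residue (p ^ N) a x -> forall m, power_residue (p ^ m) a x.
Proof.
move=> p_pr p_odd a_gt1 a_ndvd.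
have [v [t [v_gt0 t_ndvd Ea]]] := fermat_pfactor_decomp p_pr a_gt1 a_ndvd.
exists v => // x x_res m; have [le_mv | lt_vm] := leqP m v.
  by have [k Ek] := x_res; exists k; apply: eqn_mod_pexp le_mv Ek.
rewrite -(subnKC (ltnW lt_vm)); elim: (m - v) => [|i IHi]; first by rewrite addn0.
rewrite addnS; apply: power_residue_pexpS Ea _ IHi => //; exact: leq_addr.
Qed.

Section UnitZp.

Variable q : nat.
Hypothesis q_gt1 : 1 < q.

(* Junk value 1 when a is not coprime to q. *)
Definition unitZp (a : nat) : {unit 'Z_q} :=
  insubd (1%g : {unit 'Z_q}) (a%:R : 'Z_q)%R.

Lemma eqZp_nat x y : ((x%:R : 'Z_q) == y%:R)%R = (x == y %[mod q]).
Proof. by rewrite -val_eqE /= !val_Zp_nat. Qed.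

Lemma val_unitZp a : coprime q a -> val (unitZp a) = a%:R%R.
Proof. by move=> co_qa; rewrite insubdK ?unitZpE. Qed.

Lemma val_unitZpX a k : coprime q a -> val (unitZp a ^+ k)%g = (a ^ k)%:R%R.
Proof. by move=> co_qa; rewrite val_unitX val_unitZp // natrX. Qed.

Lemma unitZpX_eq a b k j : coprime q a -> coprime q b ->
  (unitZp a ^+ k == unitZp b ^+ j)%g = (a ^ k == b ^ j %[mod q]).
Proof. by move=> co_qa co_qb; rewrite -val_eqE /= !val_unitZpX // eqZp_nat. Qed.

Lemma unitZpX_eq1 a k : coprime q a ->
  (unitZp a ^+ k == 1)%g = (a ^ k == 1 %[mod q]).
Proof. by move=> co_qa; rewrite -(expg0 (unitZp 1)) unitZpX_eq ?coprimen1. Qed.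

End UnitZp.

Section CyclicUnits.

Local Open Scope group_scope.

(* The units of Z/p^n are the automorphisms of the cyclic p-group Z/p^n,
   whose automorphism group is cyclic for odd p (extremal.v). *)
Lemma units_Zp_pexp_cyclic p n : prime p -> odd p -> 0 < n ->
  cyclic (units_Zp (p ^ n)).
Proof.
move=> p_pr p_odd n_gt0.
have q_gt1 : (1 < p ^ n)%N by rewrite pexp_gt1 ?prime_gt1.
pose g : 'Z_(p ^ n) := Zp1.
have ord_g : #[g] = (p ^ n)%N by rewrite order_Zp1 Zp_cast.
have g_pgroup : p.-group <[g]> by rewrite /pgroup -/#[g] ord_g pnatX pnat_id.
have g_ntriv : (<[g]> :!=: 1) by rewrite cycle_eq1 -order_eq1 ord_g neq_ltn q_gt1 orbT.
have Aut_cyclic : cyclic (Aut <[g]>).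
  have [m [_ [_ F_cyclic _ _]]] :=
    cyclic_pgroup_Aut_structure g_pgroup (cycle_cyclic g) g_ntriv.
  by case: eqP => [_ -> // | _ [t [_ _ _]]]; rewrite p_odd => -[[]].
by have := isog_cyclic (Zp_unit_isog g); rewrite Aut_cyclic ord_g Zp_cast.
Qed.

Lemma cyclic_indexg_dvd (gT : finGroupType) (G H K : {group gT}) :
  cyclic G -> H \subset G -> K \subset G -> (#|G : K| %| #|G : H|) = (H \subset K).
Proof.
move=> G_cyclic sHG sKG; rewrite -(cardSg_cyclic G_cyclic sHG sKG).
rewrite -(dvdn_pmul2l (cardG_gt0 K)) Lagrange // -(Lagrange sHG).
by rewrite dvdn_pmul2r ?indexg_gt0.
Qed.

End CyclicUnits.

Lemma coprime_pexp p a n : prime p -> ~~ (p %| a) -> coprime (p ^ n) a.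
Proof. by move=> p_pr a_ndvd; rewrite coprimeXl // prime_coprime. Qed.

(* The paper's condition X = pi_n^-1(pi_n(X)) for X the closure of a^N; the
   other inclusion always holds. *)
Definition saturated (p a n : nat) : Prop :=
  forall x, 0 < x -> power_residue (p ^ n) a x -> adic_closure_pow p a x.

Definition unit_index (p a n : nat) : nat :=
  #|units_Zp (p ^ n) : <[unitZp (p ^ n) a]>|%g.

Lemma nX_admissible p X : (exists n, n_admissible p X n) -> n_admissible p X (nX p X).
Proof.
case=> n adm_n; have : exists n, `[< n_admissible p X n >] by exists n; apply/asboolP.
case/ex_minnP=> m /asboolP adm_m min_m.
pose least k := n_admissible p X k /\ forall j, n_admissible p X j -> k <= j.
have [adm_nX _] : least (nX p X).
  by apply: (@xgetI _ 0 least m); split=> // j /asboolP/min_m.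
exact: adm_nX.
Qed.

Section AdicClosure.

Variables p a : nat.
Hypotheses (p_pr : prime p) (a_ndvd : ~~ (p %| a)) (a_gt1 : 1 < a).

Local Notation X := (adic_closure_pow p a).

Lemma adic_closure_powE x : X x <-> 0 < x /\ forall m, power_residue (p ^ m) a x.
Proof.
split=> [[x_gt0 _ Xx] | [x_gt0 x_res]].
  by split=> // m; have [k [_ _ Ek]] := Xx m; exists k.
split=> //.
  have [k] := x_res 1; rewrite expn1 /dvdn => ->.
  by rewrite -/(dvdn p (a ^ k)) Euclid_dvdX // negb_and a_ndvd.
move=> m; have [k Ek] := x_res m; pose T := totient (p ^ m).
have T_gt0 : 0 < T by rewrite totient_gt0 expn_gt0 prime_gt0.
exists (k + T * x.+1); split.
- by rewrite addn_gt0 muln_gt0 T_gt0 orbT.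
- apply/ltnW/(leq_trans (ltn_expl x a_gt1)); rewrite leq_pexp2l ?(ltnW a_gt1) //.
  by rewrite (leq_trans (leqnSn x)) // (leq_trans (leq_pmull _ T_gt0)) ?leq_addl.
- by rewrite expn_mod_totient ?Ek // coprime_sym coprime_pexp.
Qed.

Lemma adic_closure_pow_exp k : 0 < k -> X (a ^ k).
Proof.
move=> k_gt0; apply/adic_closure_powE.
by split=> [|m]; [rewrite expn_gt0 ltnW | exists k].
Qed.

Lemma adic_closure_pow_congr n k : exists2 y, X y & y = a ^ k %[mod p ^ n].
Proof.
exists (a ^ (k + totient (p ^ n) * 1)).
  apply: adic_closure_pow_exp.
  by rewrite muln1 ltn_addl // totient_gt0 expn_gt0 prime_gt0.
by rewrite expn_mod_totient // coprime_sym coprime_pexp.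
Qed.

Lemma piX_units_adic n : 0 < n -> piX_units p n X = <[unitZp (p ^ n) a]>%g.
Proof.
move=> n_gt0; have q_gt1 := pexp_gt1 (prime_gt1 p_pr) n_gt0.
have co_a := coprime_pexp n p_pr a_ndvd.
apply/setP => u; rewrite inE; apply/asboolP/cycleP => [[x [[_ _ Xx] Eu]] | [k ->]].
  have [k [_ _ Ek]] := Xx n; exists k; apply: val_inj.
  by rewrite val_unitZpX // -Eu; apply/eqP; rewrite eqZp_nat // Ek.
have [y Xy Ey] := adic_closure_pow_congr n k; exists y; split=> //.
by rewrite val_unitZpX //; apply/eqP; rewrite eqZp_nat // Ey.
Qed.

Lemma card_piX_adic n : 0 < n -> #|piX p n X| = #[unitZp (p ^ n) a]%g.
Proof.
move=> n_gt0; have q_gt1 := pexp_gt1 (prime_gt1 p_pr) n_gt0.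
rewrite orderE -piX_units_adic // -(card_imset _ val_inj); apply: eq_card => r.
rewrite inE; apply/asboolP/imsetP => [[x [Xx <-]] | [u]].
  have co_x : coprime (p ^ n) x by case: Xx => _ x_ndvd _; apply: coprime_pexp.
  exists (unitZp (p ^ n) x); last by rewrite val_unitZp.
  by rewrite inE; apply/asboolP; exists x; rewrite val_unitZp.
by rewrite inE => /asboolP[x [Xx Ex]] ->; exists x.
Qed.

Lemma mem_piX_adic n x : 0 < n ->
  (x%:R : 'Z_(p ^ n))%R \in piX p n X <-> power_residue (p ^ n) a x.
Proof.
move=> n_gt0; have q_gt1 := pexp_gt1 (prime_gt1 p_pr) n_gt0.
rewrite inE; split=> [/asboolP[y [[_ _ Xy] /eqP]] | [k Ek]].
  rewrite eqZp_nat // => /eqP Eyx; have [k [_ _ Ek]] := Xy n.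
  by exists k; rewrite -Eyx Ek.
have [y Xy Ey] := adic_closure_pow_congr n k.
by apply/asboolP; exists y; split=> //; apply/eqP; rewrite eqZp_nat // Ey Ek.
Qed.

Lemma saturated_le n m : saturated p a n -> n <= m -> saturated p a m.
Proof.
move=> sat_n le_nm x x_gt0 [k Ek]; apply: sat_n x_gt0 _.
by exists k; apply: eqn_mod_pexp Ek.
Qed.

Lemma saturated_exists : odd p -> exists2 N, 0 < N & saturated p a N.
Proof.
move=> p_odd; have [N N_gt0 stable] := power_residue_stable p_pr p_odd a_gt1 a_ndvd.
by exists N => // x x_gt0 x_res; apply/adic_closure_powE; split=> //; apply: stable.
Qed.

Lemma admissible_saturated n : n_admissible p X n -> saturated p a n.
Proof. by case=> n_gt0 memX _ x x_gt0 /(mem_piX_adic _ n_gt0)/(memX x x_gt0). Qed.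

Lemma saturated_admissible n : odd p -> 0 < n -> saturated p a n ->
  p <= #[unitZp (p ^ n) a]%g -> n_admissible p X n.
Proof.
move=> p_odd n_gt0 sat_n le_p_ord; split=> //.
  move=> x x_gt0; split=> [Xx | /mem_piX_adic x_res]; last exact: sat_n (x_res n_gt0).
  by rewrite inE; apply/asboolP; exists x.
by rewrite card_piX_adic // (maxn_idPl (odd_prime_gt2 p_odd p_pr)).
Qed.

Lemma order_unitZp_pexpS_dvd n : odd p -> 0 < n ->
  #[unitZp (p ^ n) a]%g %| #[unitZp (p ^ n.+1) a]%g /\
  #[unitZp (p ^ n.+1) a]%g %| p * #[unitZp (p ^ n) a]%g.
Proof.
move=> p_odd n_gt0; have q_gt1 := pexp_gt1 (prime_gt1 p_pr) n_gt0.
have q'_gt1 := pexp_gt1 (prime_gt1 p_pr) (ltn0Sn n).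
have co := coprime_pexp n p_pr a_ndvd; have co' := coprime_pexp n.+1 p_pr a_ndvd.
set o := #[unitZp (p ^ n) a]%g.
have ao1 : a ^ o = 1 %[mod p ^ n] by apply/eqP; rewrite -unitZpX_eq1 // expg_order.
split; rewrite order_dvdn unitZpX_eq1 //.
  apply/eqP/(eqn_mod_pexp (leqnSn n))/eqP.
  by rewrite -unitZpX_eq1 // expg_order.
have [c Ec] : exists c, a ^ o = 1 + c * p ^ n.
  by apply: eqn_mod_add ao1; rewrite expn_gt0 ltnW.
have [s Es] := lift_exponent_step c p_pr p_odd n_gt0.
by rewrite mulnC expnM Ec Es addnC modnMDl.
Qed.

Lemma order_unitZp_succ n : odd p -> 0 < n -> saturated p a n ->
  #[unitZp (p ^ n.+1) a]%g = p * #[unitZp (p ^ n) a]%g.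
Proof.
move=> p_odd n_gt0 sat_n.
have [o_dvd_d d_dvd_po] := order_unitZp_pexpS_dvd p_odd n_gt0.
suff d_neq_o : #[unitZp (p ^ n.+1) a]%g != #[unitZp (p ^ n) a]%g.
  have [e Ee] := dvdnP o_dvd_d.
  move: d_dvd_po d_neq_o; rewrite Ee dvdn_pmul2r ?order_gt0 // => /(primeP p_pr).2.
  by case/orP=> /eqP ->; rewrite ?mul1n ?eqxx.
(* By saturation 1 + p^n = a^k mod p^(n+1); then the order mod p^n divides k,
   so equal orders would force 1 + p^n = 1 mod p^(n+1). *)
have q_gt1 := pexp_gt1 (prime_gt1 p_pr) n_gt0.
have q'_gt1 := pexp_gt1 (prime_gt1 p_pr) (ltn0Sn n).
have co := coprime_pexp n p_pr a_ndvd; have co' := coprime_pexp n.+1 p_pr a_ndvd.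
apply/eqP => Edo.
have [_ _ /(_ n.+1)[k [_ _ Ek]]] : X (1 + p ^ n).
  by apply: sat_n; [rewrite addn_gt0 | exists 0; rewrite -modnDmr modnn addn0].
have : #[unitZp (p ^ n) a]%g %| k.
  rewrite order_dvdn unitZpX_eq1 //; apply/eqP.
  by rewrite (eqn_mod_pexp (leqnSn n) Ek) -modnDmr modnn addn0.
have lt_q' : 1 + p ^ n < p ^ n.+1.
  rewrite expnS (leq_ltn_trans (_ : _ <= 2 * p ^ n)) ?ltn_pmul2r ?odd_prime_gt2 //.
    by rewrite mul2n -addnn leq_add2r ltnW.
  by rewrite expn_gt0 prime_gt0.
rewrite -Edo order_dvdn unitZpX_eq1 // Ek !modn_small // -{2}[1]addn0 eqn_add2l.
by rewrite expn_eq0 (gtn_eqF (prime_gt0 p_pr)).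
Qed.

Lemma unit_index_order n : 0 < n ->
  #[unitZp (p ^ n) a]%g * unit_index p a n = p.-1 * p ^ n.-1.
Proof.
move=> n_gt0; rewrite orderE /unit_index Lagrange; last exact: finset.subsetT.
by rewrite card_units_Zp ?expn_gt0 ?prime_gt0 // totient_pfactor.
Qed.

Lemma unit_index_succ n : odd p -> 0 < n -> saturated p a n ->
  unit_index p a n.+1 = unit_index p a n.
Proof.
move=> p_odd n_gt0 sat_n; apply/eqP.
have po_gt0 : 0 < p * #[unitZp (p ^ n) a]%g by rewrite muln_gt0 prime_gt0 ?order_gt0.
rewrite -(eqn_pmul2l po_gt0).
rewrite -{1}order_unitZp_succ // unit_index_order // -mulnA unit_index_order //.
by case: n n_gt0 {sat_n po_gt0} => // n _; rewrite expnS mulnCA.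
Qed.

Lemma unit_index_le n m : odd p -> 0 < n -> saturated p a n -> n <= m ->
  unit_index p a m = unit_index p a n.
Proof.
move=> p_odd n_gt0 sat_n /subnKC <-; elim: (m - n) => [|i IHi]; first by rewrite addn0.
rewrite addnS unit_index_succ ?IHi ?ltn_addr //.
by apply: saturated_le sat_n _; apply: leq_addr.
Qed.

Lemma admissible_exists : odd p -> exists n, n_admissible p X n.
Proof.
move=> p_odd; have [N N_gt0 sat_N] := saturated_exists p_odd.
exists N.+1; apply: saturated_admissible => //; first exact: saturated_le sat_N _.
by rewrite order_unitZp_succ // leq_pmulr ?order_gt0.
Qed.

Lemma nX_adic_closure_pow : odd p -> 0 < nX p X /\ saturated p a (nX p X).
Proof.
move=> p_odd; have adm := nX_admissible (admissible_exists p_odd).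
by split; [case: adm | exact: admissible_saturated].
Qed.

Lemma iX_adic_closure_pow m : odd p -> nX p X <= m -> iX p X = unit_index p a m.
Proof.
move=> p_odd le_m; have [nX_gt0 sat] := nX_adic_closure_pow p_odd.
by rewrite /iX piX_units_adic // (unit_index_le p_odd nX_gt0 sat le_m).
Qed.

Lemma adic_closure_pow_subset b n : ~~ (p %| b) -> 0 < n -> saturated p b n ->
  (forall x, X x -> adic_closure_pow p b x) <->
  (<[unitZp (p ^ n) a]> \subset <[unitZp (p ^ n) b]>)%g.
Proof.
move=> b_ndvd n_gt0 sat_b; have q_gt1 := pexp_gt1 (prime_gt1 p_pr) n_gt0.
have co_a := coprime_pexp n p_pr a_ndvd; have co_b := coprime_pexp n p_pr b_ndvd.
rewrite cycle_subG; split=> [sXY | /cycleP[j Ej] x [x_gt0 _ /(_ n)[k [_ _ Ek]]]].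
  have [_ _ /(_ n)[k [_ _ Ek]]] := sXY _ (adic_closure_pow_exp (ltn0Sn 0)).
  by apply/cycleP; exists k; apply/eqP; rewrite -[unitZp _ a]expg1 unitZpX_eq // Ek.
apply: sat_b x_gt0 _; exists (j * k); apply/eqP; rewrite -Ek -unitZpX_eq //.
by rewrite expgM -Ej.
Qed.

End AdicClosure.

Theorem lemma4p3 (p : nat) (X Y : set nat) :
  prime p -> odd p -> in_calX p X -> in_calX p Y ->
  ((forall x : nat, X x -> Y x) <-> (iX p Y %| iX p X)%N).
Proof.
move=> p_pr p_odd [a [a_gt0 a_ndvd a_neq1 ->]] [b [b_gt0 b_ndvd b_neq1 ->]].
have a_gt1 : 1 < a by rewrite ltn_neqAle eq_sym a_neq1.
have b_gt1 : 1 < b by rewrite ltn_neqAle eq_sym b_neq1.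
set n := maxn (nX p (adic_closure_pow p a)) (nX p (adic_closure_pow p b)).
have [le_an le_bn] : nX p (adic_closure_pow p a) <= n /\ nX p (adic_closure_pow p b) <= n.
  by rewrite leq_maxl leq_maxr.
have [nb_gt0 sat_nb] := nX_adic_closure_pow p_pr b_ndvd b_gt1 p_odd.
have n_gt0 : 0 < n := leq_trans nb_gt0 le_bn.
rewrite (iX_adic_closure_pow p_pr a_ndvd a_gt1 p_odd le_an).
rewrite (iX_adic_closure_pow p_pr b_ndvd b_gt1 p_odd le_bn).
rewrite /unit_index cyclic_indexg_dvd ?units_Zp_pexp_cyclic ?finset.subsetT //.
exact: adic_closure_pow_subset (saturated_le sat_nb le_bn).
Qed.
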